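(* Suppose there exist a language $g\in\mathbf{E}$ and $\iota>0$ such that, for every $n$, every Boolean circuit computing $g|_n$ has size at least $2^{\iota n}$. Then for every $\gamma>0$ there exists $c\in\mathbb{N}^+$ such that, as $n\to\infty$, $$\sup\left\{\frac{|f|_{\mathcal{C}}}{|f|_{\mathcal{U}^c}}: f\in H^n,\ |f|_{\mathcal{U}^c}<+\infty\right\}\in\Omega(n^{1+\gamma}).$$
   Context: Let $\mathcal{B}=\{0,1\}$, let $\mathcal{B}^*$ be the set of finite binary strings and $|h|$ the length of $h\in\mathcal{B}^*$. For $n\in\mathbb{N}^+$, $H^n$ is the set of all functions $\mathcal{B}^n\to\mathcal{B}$. An interpreter is a Turing machine computing a partial function $\varphi:\mathcal{B}^*\times\mathcal{B}^*\to\mathcal{B}\cup\{\bot\}$, where $\bot$ denotes non-halting (or invalid) output. For $f\in H^n$, $|f|_\varphi=\min\{|h|:\varphi(h,x)=f(x)\ \forall x\in\mathcal{B}^n\}$ ($+\infty$ if no such $h$). Turing machines have alphabet $\{0,1,b\}$ ($b$ blank), a finite state set containing an initial state and two final states accept/reject; the output is $1$ if halting in accept, $0$ if halting in reject, $\bot$ otherwise; multi-tape machines have read-only input tapes and read/write work tapes, and the transition function is a finite list of rules. $E(T)$ is a fixed prefix-free binary encoding of a machine $T$ listing its rules (of length at least 2 for every machine). For $c\in\mathbb{N}^+$, $\mathcal{U}^c$ is a time-bounded universal interpreter (a 2-input-tape, 3-work-tape machine): on $(p,x)$ with $n=|x|$, it checks within $n^c$ steps whether $p=E(T)u$ for a two-input-tape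 machine $T$ and $u\in\mathcal{B}^*$ (outputting $\bot$ if not, or if the check does not finish), then simulates $T$ on $(u,x)$ with an efficient universal simulation (Hennie–Stearns, overhead $O(t\log t)$ for $t$ simulated steps), devoting at most $n^c$ of its own steps to the simulation; it outputs $T$'s output if $T$ halts within this budget and $0$ otherwise. For fixed $p$ it runs in at most $\beta n^c$ steps for a constant $\beta$. In particular, if a Turing machine computes $g:\mathcal{B}^*\to\mathcal{B}$ in time $O(n^{c'})$ with $c'<c$, there is $h\in\mathcal{B}^*$ with $\mathcal{U}^c(h,x)=g(x)$ for all $x$ of sufficiently large length. A Boolean circuit on $n$ inputs is a DAG with a unique sink (output) whose sources are labelled by input indices in $\{1,\dots,n\}$ and whose other vertices (gates) are labelled AND, OR (two incoming edges) or NOT (one incoming edge); its size $|C|$ is its number of vertices. The circuit interpreter $\mathcal{C}$ reads a program $h=0^{\lceil\log_2 n\rceil}1\,[\text{binary expansion of } n]\,0^{|C|}1\,[\text{description of vertex } i]_{i=1}^{|C|}$, each vertex being described by its label and its parents/input index using $\max\{2\lceil\log_2|C|\rceil,\lceil\log_2 n\rceil\}$ bits beyond the label bits, so a circuit $C$ on $n$ inputs has encoding length $L(|C|,n)=2\lceil\log_2 n\rceil+2+|C|(3+\max\{2\lceil\log_2|C|\rceil,\lceil\log_2 n\rceil\})$; $\mathcal{C}(h,x)$ is the circuit's output on $x\in\mathcal{B}^n$, and $\bot$ if $h$ is malformed. Hence $|f|_{\mathcal{C}}=\min\{L(|C|,n): C \text{ computes } f\}$. A language is a subset $L\subseteq\mathcal{B}^*$,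 identified with its indicator function; $L|_n\in H^n$ is its restriction to inputs of length $n$. $\mathbf{E}$ is the class of languages decidable by a deterministic Turing machine in time $2^{O(n)}$. *)

From Stdlib Require Import Reals ZArith ClassicalEpsilon.
From mathcomp Require Import all_boot.

Set Implicit Arguments.
Unset Strict Implicit.
Unset Printing Implicit Defensive.

(* Minimum of a set of naturals, with None standing for +infinity.   *)
Definition nmin (P : nat -> Prop) : option nat :=
  match excluded_middle_informative (exists k, P k) with
  | left _ => Some (epsilon (inhabits 0) (fun k => P k /\ forall j, P j -> k <= j))
  | right _ => None
  end.

Inductive sym := S0 | S1 | Sb.
Inductive move := MoveL | MoveR | MoveS.

Definition mv (d : move) : Z :=
  match d with MoveL => (-1)%Z | MoveR => 1%Z | MoveS => 0%Z end.

Record TM := mkTM {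
  tm_Q : finType;
  tm_q0 : tm_Q;
  tm_acc : tm_Q;
  tm_rej : tm_Q;
  tm_acc_rej : tm_acc != tm_rej;
  tm_k : nat;
  tm_delta : tm_Q -> sym -> tm_k.-tuple sym ->
             tm_Q * move * tm_k.-tuple (sym * move)
}.

Record conf (M : TM) := mkConf {
  c_q : tm_Q M;
  c_ih : Z;
  c_tape : 'I_(tm_k M) -> Z -> sym;
  c_wh : 'I_(tm_k M) -> Z
}.

Definition bit (b : bool) : sym := if b then S1 else S0.

Definition read_input (x : seq bool) (z : Z) : sym :=
  if (Z.leb 0 z && Z.ltb z (Z.of_nat (size x)))%bool
  then bit (nth false x (Z.to_nat z)) else Sb.

Definition halted (M : TM) (q : tm_Q M) : bool := (q == tm_acc M) || (q == tm_rej M).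

Definition init_conf (M : TM) : conf M :=
  @mkConf M (tm_q0 M) 0%Z (fun _ _ => Sb) (fun _ => 0%Z).

Definition step (M : TM) (x : seq bool) (c : conf M) : conf M :=
  if halted (c_q c) then c else
  let rw := [tuple c_tape c i (c_wh c i) | i < tm_k M] in
  match tm_delta (c_q c) (read_input x (c_ih c)) rw with
  | (q', d, wr) =>
      @mkConf M q' (c_ih c + mv d)%Z
        (fun i z => if Z.eqb z (c_wh c i) then (tnth wr i).1 else c_tape c i z)
        (fun i => (c_wh c i + mv (tnth wr i).2)%Z)
  end.

Definition run (M : TM) (x : seq bool) (t : nat) : conf M :=
  ssrnat.iter t (step x) (init_conf M).

Definition decides_within (M : TM) (g : seq bool -> bool) (T : nat -> nat) : Prop :=
  forall x : seq bool, exists t, t <= T (size x) /\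
    c_q (run M x t) = (if g x then tm_acc M else tm_rej M).

Definition in_E (g : seq bool -> bool) : Prop :=
  exists (M : TM) (C a : nat), decides_within M g (fun n => C * 2 ^ (a * n)).

Definition computes_in_poly_time (M : TM) (g : seq bool -> bool) (c' : nat) : Prop :=
  exists C : nat, decides_within M g (fun n => C * n ^ c' + C).

(* Boolean circuits, as a topologically ordered list of vertices.     *)
(* Vertex i may only use vertices j < i as parents; input indices are *)
(* 0-based (k < n stands for the paper's index k+1 in {1..n}).        *)
Inductive gate := GIn of nat | GAnd of nat & nat | GOr of nat & nat | GNot of nat.

Definition gate_ok (n i : nat) (g : gate) : bool :=
  match g with
  | GIn k => k < n
  | GAnd a b | GOr a b => (a < i) && (b < i)
  | GNot a => a < i
  end.

Definition refs (i : nat) (g : gate) : bool :=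
  match g with
  | GIn _ => false
  | GAnd a b | GOr a b => (a == i) || (b == i)
  | GNot a => a == i
  end.

(* well-formed circuit on n inputs: nonempty DAG whose unique sink is the
   last vertex (every other vertex has an outgoing edge). *)
Definition circuit_wf (n : nat) (C : seq gate) : bool :=
  [&& 0 < size C,
      all (fun i => gate_ok n i (nth (GIn 0) C i)) (iota 0 (size C))
    & all (fun i => has (fun j => refs i (nth (GIn 0) C j)) (iota 0 (size C)))
          (iota 0 (size C).-1)].

Definition eval_gate (x vals : seq bool) (g : gate) : bool :=
  match g with
  | GIn k => nth false x k
  | GAnd a b => nth false vals a && nth false vals b
  | GOr a b => nth false vals a || nth false vals b
  | GNot a => ~~ nth false vals a
  end.

Definition circ_vals (C : seq gate) (x : seq bool) : seq bool :=
  foldl (fun vals g => rcons vals (eval_gate x vals g)) [::] C.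

Definition circ_out (C : seq gate) (x : seq bool) : bool := last false (circ_vals C x).

Definition circuit_computes (n : nat) (C : seq gate) (f : n.-tuple bool -> bool) : Prop :=
  circuit_wf n C /\ forall x : n.-tuple bool, circ_out C x = f x.

(* encoding length L(|C|, n); up_log 2 m = ceil(log2 m) for m >= 1 *)
Definition circ_len (s n : nat) : nat :=
  2 * up_log 2 n + 2 + s * (3 + maxn (2 * up_log 2 s) (up_log 2 n)).

Notation H n := {ffun n.-tuple bool -> bool}.

Definition compC (n : nat) (f : H n) : option nat :=
  nmin (fun k => exists C : seq gate, circuit_computes C f /\ k = circ_len (size C) n).

(* interpreters: partial functions, None = bottom *)
Definition interpreter := seq bool -> seq bool -> option bool.

Definition compI (phi : interpreter) (n : nat) (f : H n) : option nat :=
  nmin (fun k => exists h : seq bool, size h = k /\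
                   forall x : n.-tuple bool, phi h x = Some (f x)).

(* sup { |f|_C / |f|_phi : f in H^n, |f|_phi < +oo }  (a max over a finite set;
   all ratios are >= 0) *)
Definition sup_ratio (phi : interpreter) (n : nat) : R :=
  \big[Rmax/R0]_(f : H n | isSome (compI phi f))
     (Rdiv (INR (odflt 0%N (compC f))) (INR (odflt 0%N (compI phi f)))).

Definition restr (g : seq bool -> bool) (n : nat) : n.-tuple bool -> bool :=
  fun x => g x.

From HB Require Import structures.
From Stdlib Require Import Reals Lra Lia ZArith Classical ClassicalEpsilon.
From mathcomp Require Import all_boot zify.

Set Implicit Arguments.
Unset Strict Implicit.
Unset Printing Implicit Defensive.

(* Pick [j] with [io * j >= 1 + gamma] and let [f x = g (take (j * binlen |x|) x)].  A machine
   computes [f] in polynomial time: it counts [|x|] in binary, marks the first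
   [m = j * binlen |x|] input cells and runs the [2^O(m)]-time decider of [g] on them, and
   [2^O(j log n)] is polynomial.  So one fixed program of [U^c] computes [f] on all long
   inputs, while a circuit for [f] on [n] inputs yields one of the same size for [g] on [m]
   inputs, whence [|f|_C >= 2^(io m) >= n^(1 + gamma)]. *)

Definition unary (w : nat) (z : Z) : sym :=
  if (Z.leb 0 z && Z.ltb z (Z.of_nat w))%bool then S1 else Sb.

Lemma Z_neg_or_nat z : (z < 0)%Z \/ exists t, z = Z.of_nat t.
Proof. by case: (Z.ltb_spec z 0) => Hz; [left | right; exists (Z.to_nat z); lia]. Qed.

Lemma read_input_nat (bs : seq bool) t :
  read_input bs (Z.of_nat t) = if t < size bs then bit (nth false bs t) else Sb.
Proof.
rewrite /read_input Nat2Z.id.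
have -> : Z.leb 0 (Z.of_nat t) = true by apply/Z.leb_le; lia.
by case: Z.ltb_spec => H; case: ltnP => H2 //; lia.
Qed.

Lemma read_input_neg (bs : seq bool) z : (z < 0)%Z -> read_input bs z = Sb.
Proof. by move=> Hz; rewrite /read_input; case: Z.leb_spec => //; lia. Qed.

Lemma unary_nat w t : unary w (Z.of_nat t) = if t < w then S1 else Sb.
Proof.
rewrite /unary.
have -> : Z.leb 0 (Z.of_nat t) = true by apply/Z.leb_le; lia.
by case: Z.ltb_spec => H; case: ltnP => H2 //; lia.
Qed.

Lemma unary_neg w z : (z < 0)%Z -> unary w z = Sb.
Proof. by move=> Hz; rewrite /unary; case: Z.leb_spec => //; lia. Qed.

Lemma write_same (f : Z -> sym) h s z : f h = s -> (if Z.eqb z h then s else f z) = f z.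
Proof. by move=> <-; case: Z.eqb_spec => // ->. Qed.

Lemma read_input_write bs1 s b p : size bs1 = p -> forall z,
  (if Z.eqb z (Z.of_nat p) then bit b else read_input (bs1 ++ s) z) =
  read_input (bs1 ++ b :: behead s) z.
Proof.
move=> Hs z; case: (Z_neg_or_nat z) => [Hz|[t ->]].
  by rewrite !read_input_neg //; case: Z.eqb_spec => //; lia.
rewrite !read_input_nat !size_cat /= Hs.
case: Z.eqb_spec => [/Nat2Z.inj ->|Hne].
  by rewrite nth_cat Hs ltnn subnn addnS ltnS leq_addr.
rewrite !nth_cat Hs.
case: (ltnP t p) => Htp; first by rewrite !(leq_trans Htp (leq_addr _ _)).
have Hpt : p < t by rewrite ltn_neqAle Htp andbT; apply/eqP=> E; apply: Hne; rewrite E.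
case: s => [|b0 s'] /=; first by rewrite addn0 ltnNge ltnW // addn1 ltnS leqNgt Hpt.
by rewrite -(subnSK Hpt) /= addnS.
Qed.

Lemma unary_write w z : (if Z.eqb z (Z.of_nat w) then S1 else unary w z) = unary w.+1 z.
Proof.
case: (Z_neg_or_nat z) => [Hz|[t ->]].
  by rewrite !unary_neg //; case: Z.eqb_spec => //; lia.
rewrite !unary_nat; case: Z.eqb_spec => [/Nat2Z.inj ->|Hne]; first by rewrite ltnSn.
by rewrite ltnS (leq_eqVlt t); case: eqP => // E; case: Hne; rewrite E.
Qed.

Lemma read_input_take m x z :
  read_input (take m x) z = if unary m z is S1 then read_input x z else Sb.
Proof.
case: (Z_neg_or_nat z) => [Hz|[t ->]]; first by rewrite unary_neg // read_input_neg.
rewrite !read_input_nat unary_nat size_take_min.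
case: (ltnP t m) => Htm; first by rewrite nth_take // leq_min Htm.
by rewrite ltnNge (leq_trans (geq_minl _ _) Htm).
Qed.

Lemma step_running (M : TM) x (c : conf M) q' d wr :
  halted (c_q c) = false ->
  tm_delta (c_q c) (read_input x (c_ih c)) [tuple c_tape c i (c_wh c i) | i < tm_k M]
    = (q', d, wr) ->
  step x c = @mkConf M q' (c_ih c + mv d)%Z
     (fun i z => if Z.eqb z (c_wh c i) then (tnth wr i).1 else c_tape c i z)
     (fun i => (c_wh c i + mv (tnth wr i).2)%Z).
Proof. by move=> Hh Hd; rewrite /step Hh /= Hd. Qed.

Lemma decides_within_mono (M : TM) g (T T' : nat -> nat) :
  decides_within M g T -> (forall n, T n <= T' n) -> decides_within M g T'.
Proof.
move=> H HT x; have [t [Ht Hq]] := H x; exists t; split => //.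
exact: leq_trans Ht (HT _).
Qed.

(** * Binary counters *)

Fixpoint bin_succ (s : seq bool) : seq bool :=
  match s with
  | [::] => [:: true]
  | false :: s' => true :: s'
  | true :: s' => false :: bin_succ s'
  end.

Fixpoint bin_val (s : seq bool) : nat := if s is b :: s' then b + 2 * bin_val s' else 0.

Definition bin_normal (s : seq bool) : bool := if s is b :: s' then last b s' else true.

Definition binlen (n : nat) : nat := size (iter n bin_succ [::]).

Lemma bin_val_succ s : bin_val (bin_succ s) = (bin_val s).+1.
Proof. by elim: s => //= [[]] s IH /=; rewrite ?IH; lia. Qed.

Lemma bin_val_lt s : bin_val s < 2 ^ size s.
Proof. by elim: s => //= b s IH; rewrite expnS; case: b => /=; lia. Qed.

Lemma bin_succ_neq0 s : bin_succ s <> [::].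
Proof. by case: s => [|[] s]. Qed.

Lemma size_bin_succ s : size (bin_succ s) <= (size s).+1.
Proof. by elim: s => //= [[]] s IH //=; rewrite ltnS. Qed.

Lemma bin_normal_succ s : bin_normal s -> bin_normal (bin_succ s).
Proof.
elim: s => //= b s IH; case: b => /=; last by case: s IH.
move=> Hs; have Hg : bin_normal s by case: s Hs IH.
by have := IH Hg; have := @bin_succ_neq0 s; case: (bin_succ s).
Qed.

Lemma bin_val_normal s : bin_normal s -> s <> [::] -> 2 ^ (size s).-1 <= bin_val s.
Proof.
elim: s => //= b s IH Hg _.
case: s IH Hg => [|b' s] IH Hg; first by move: Hg => /= ->.
by have := IH Hg (fun E => ltac:(discriminate E)); rewrite /= expnS; lia.
Qed.

Lemma bin_val_iter n : bin_val (iter n bin_succ [::]) = n.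
Proof. by elim: n => //= n IH; rewrite bin_val_succ IH. Qed.

Lemma bin_normal_iter n : bin_normal (iter n bin_succ [::]).
Proof. by elim: n => //= n IH; apply: bin_normal_succ. Qed.

Lemma binlen_le n : binlen n <= n.
Proof. by elim: n => //= n IH; apply: leq_trans (size_bin_succ _) _. Qed.

Lemma ltn_exp2_binlen n : n < 2 ^ binlen n.
Proof. by have := bin_val_lt (iter n bin_succ [::]); rewrite bin_val_iter. Qed.

Lemma binlen_gt0 n : 0 < n -> 0 < binlen n.
Proof. by move=> Hn; have := ltn_exp2_binlen n; case: binlen => //; rewrite expn0; lia. Qed.

Lemma exp2_binlen_leq n : 0 < n -> 2 ^ (binlen n).-1 <= n.
Proof.
move=> Hn; rewrite -{2}(bin_val_iter n); apply: bin_val_normal; first exact: bin_normal_iter.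
by case: n Hn => // n _; apply: bin_succ_neq0.
Qed.

Lemma exp2_binlen_leq_double n : 2 ^ binlen n <= n.*2.+1.
Proof.
case: n => [|n] //.
have H := exp2_binlen_leq (ltn0Sn n); have Hp := binlen_gt0 (ltn0Sn n).
by rewrite -(prednK Hp) expnS; lia.
Qed.

(** * The prefix machine *)

(* [Count] reads the input, incrementing a binary counter (least significant bit first) once
   per symbol; [Mark] then writes [j] ones on the mark tape per counter bit, the [Stamp r]
   phases counting them; finally both heads are rewound and [M] is started. *)
Inductive phase (j : nat) :=
  Count | Incr | Return | Mark | Stamp of 'I_j.+1 | RewindMark | RewindInput.
Arguments Count {j}. Arguments Incr {j}. Arguments Return {j}. Arguments Mark {j}.
Arguments Stamp {j}. Arguments RewindMark {j}. Arguments RewindInput {j}.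

Definition phase_code j (p : phase j) : 'I_6 + 'I_j.+1 :=
  match p with
  | Count => inl (@Ordinal 6 0 isT) | Incr => inl (@Ordinal 6 1 isT)
  | Return => inl (@Ordinal 6 2 isT) | Mark => inl (@Ordinal 6 3 isT)
  | RewindMark => inl (@Ordinal 6 4 isT) | RewindInput => inl (@Ordinal 6 5 isT)
  | Stamp r => inr r
  end.

Definition phase_decode j (s : 'I_6 + 'I_j.+1) : phase j :=
  match s with
  | inr r => Stamp r
  | inl o => match val o with
             | 0 => Count | 1 => Incr | 2 => Return | 3 => Mark | 4 => RewindMark
             | _ => RewindInput
             end
  end.

Lemma phase_codeK j : cancel (@phase_code j) (@phase_decode j).
Proof. by case. Qed.

HB.instance Definition _ j := Equality.copy (phase j) (can_type (@phase_codeK j)).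
HB.instance Definition _ j := Finite.copy (phase j) (can_type (@phase_codeK j)).

Section PrefixMachine.
Variables (M : TM) (j : nat).
Notation k := (tm_k M).

Definition prefix_state : finType := (tm_Q M + phase j)%type.

(* Tape 0 holds a binary counter, tape 1 the unary mark, the others are M's work tapes. *)
Definition tape_case {T} (a b : T) (f : 'I_k -> T) (i : 'I_k.+2) : T :=
  match unlift ord0 i with
  | None => a
  | Some i' => match unlift ord0 i' with None => b | Some i'' => f i'' end
  end.

Definition counter_tape : 'I_k.+2 := ord0.
Definition mark_tape : 'I_k.+2 := lift ord0 ord0.
Definition work_tape (i : 'I_k) : 'I_k.+2 := lift ord0 (lift ord0 i).

Lemma tape_case_counter T a b f : @tape_case T a b f counter_tape = a.
Proof. by rewrite /tape_case unlift_none. Qed.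

Lemma tape_case_mark T a b f : @tape_case T a b f mark_tape = b.
Proof. by rewrite /tape_case liftK unlift_none. Qed.

Lemma tape_case_work T a b f i : @tape_case T a b f (work_tape i) = f i.
Proof. by rewrite /tape_case !liftK. Qed.

Definition phase_delta (p : phase j) (s cs ms : sym) :
    prefix_state * move * (sym * move) * (sym * move) :=
  match p with
  | Count => if s is Sb then (inr Mark, MoveS, (cs, MoveS), (ms, MoveS))
             else (inr Incr, MoveR, (cs, MoveS), (ms, MoveS))
  | Incr => if cs is S1 then (inr Incr, MoveS, (S0, MoveR), (ms, MoveS))
            else (inr Return, MoveS, (S1, MoveL), (ms, MoveS))
  | Return => if cs is Sb then (inr Count, MoveS, (cs, MoveR), (ms, MoveS))
              else (inr Return, MoveS, (cs, MoveL), (ms, MoveS))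
  | Mark => if cs is Sb then (inr RewindMark, MoveS, (cs, MoveS), (ms, MoveL))
            else (inr (Stamp ord0), MoveS, (cs, MoveS), (ms, MoveS))
  | Stamp r => if val r == j then (inr Mark, MoveS, (cs, MoveR), (ms, MoveS))
               else (inr (Stamp (inord r.+1)), MoveS, (cs, MoveS), (S1, MoveR))
  | RewindMark => if ms is Sb then (inr RewindInput, MoveL, (cs, MoveS), (ms, MoveR))
                  else (inr RewindMark, MoveS, (cs, MoveS), (ms, MoveL))
  | RewindInput => if s is Sb then (inl (tm_q0 M), MoveR, (cs, MoveS), (ms, MoveS))
                   else (inr RewindInput, MoveL, (cs, MoveS), (ms, MoveS))
  end.

(* While M runs, the mark head moves with the input head, and M is shown the
   input symbol only where the mark tape holds a 1. *)
Definition prefix_delta (q : prefix_state) (s : sym) (t : k.+2.-tuple sym) :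
    prefix_state * move * k.+2.-tuple (sym * move) :=
  let cs := tnth t counter_tape in
  let ms := tnth t mark_tape in
  let ws := [tuple tnth t (work_tape i) | i < k] in
  match q with
  | inl qm =>
      let: (q2, d, wr) := tm_delta qm (if ms is S1 then s else Sb) ws in
      (inl q2, d, [tuple tape_case (cs, MoveS) (ms, d) (tnth wr) i | i < k.+2])
  | inr p =>
      let: (q2, d, a, b) := phase_delta p s cs ms in
      (q2, d, [tuple tape_case a b (fun i => (tnth ws i, MoveS)) i | i < k.+2])
  end.

Lemma prefix_acc_rej : (inl (tm_acc M) : prefix_state) != inl (tm_rej M).
Proof. by rewrite inj_eq; [exact: tm_acc_rej | exact: inl_inj]. Qed.

Definition prefix_TM : TM :=
  @mkTM prefix_state (inr Count) (inl (tm_acc M)) (inl (tm_rej M)) prefix_acc_rej k.+2 prefix_delta.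

Record phase_conf (c : conf prefix_TM) (q : prefix_state) (i : Z) (bs : seq bool) (ph : Z)
    (w : nat) (mh : Z) : Prop := PhaseConf {
  pc_state : c_q c = q;
  pc_input_head : c_ih c = i;
  pc_counter : forall z, c_tape c counter_tape z = read_input bs z;
  pc_counter_head : c_wh c counter_tape = ph;
  pc_mark : forall z, c_tape c mark_tape z = unary w z;
  pc_mark_head : c_wh c mark_tape = mh;
  pc_work : forall i, c_wh c (work_tape i) = 0%Z /\ forall z, c_tape c (work_tape i) z = Sb
}.

Lemma phase_conf_step x c p i bs ph w mh q2 d a b i' bs' ph' w' mh' :
  phase_conf c (inr p) i bs ph w mh ->
  phase_delta p (read_input x i) (read_input bs ph) (unary w mh) = (q2, d, a, b) ->
  i' = (i + mv d)%Z -> ph' = (ph + mv a.2)%Z -> mh' = (mh + mv b.2)%Z ->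
  (forall z, (if Z.eqb z ph then a.1 else read_input bs z) = read_input bs' z) ->
  (forall z, (if Z.eqb z mh then b.1 else unary w z) = unary w' z) ->
  phase_conf (step x c) q2 i' bs' ph' w' mh'.
Proof.
case=> Hq Hi HC HCh HM HMh Hw Hd -> -> -> Ebs Ew.
set T := [tuple c_tape c i (c_wh c i) | i < k.+2].
set ws := [tuple tnth T (work_tape i) | i < k].
rewrite (@step_running prefix_TM x c q2 d
           [tuple tape_case a b (fun i => (tnth ws i, MoveS)) i | i < k.+2]); last first.
- by rewrite Hq /= /prefix_delta -/T -/ws !tnth_mktuple Hi HCh HMh HC HM Hd.
- by rewrite Hq.
constructor=> /=; rewrite ?tnth_mktuple ?tape_case_counter ?tape_case_mark //.
- by rewrite Hi.
- by move=> z; rewrite HCh HC Ebs.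
- by rewrite HCh.
- by move=> z; rewrite HMh HM Ew.
- by rewrite HMh.
move=> i0; rewrite !tnth_mktuple tape_case_work /=; have [H1 H2] := Hw i0.
by split=> [|z]; rewrite ?H1 ?Z.add_0_r // !tnth_mktuple H2; case: Z.eqb.
Qed.

Ltac phase_side := try done; try (by move=> z; apply: write_same); try (by rewrite /=; lia).

Lemma run_return x p : forall bs i w mh c, p <= size bs ->
  phase_conf c (inr Return) i bs (Z.of_nat p - 1) w mh ->
  phase_conf (iter p.+1 (step x) c) (inr Count) i bs 0 w mh.
Proof.
elim: p => [|p IH] bs i w mh c Hp H.
  have Hr : read_input bs (Z.of_nat 0 - 1) = Sb by apply: read_input_neg; lia.
  by apply: (phase_conf_step H); rewrite ?Hr; phase_side.
rewrite iterSr; apply: IH; first exact: ltnW.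
have E : (Z.of_nat p.+1 - 1 = Z.of_nat p)%Z by lia.
rewrite E in H.
have Hr : read_input bs (Z.of_nat p) = bit (nth false bs p) by rewrite read_input_nat Hp.
by case: (nth false bs p) Hr => Hr; apply: (phase_conf_step H); rewrite ?Hr; phase_side.
Qed.

Lemma run_incr x s : forall p i w mh c,
  phase_conf c (inr Incr) i (nseq p false ++ s) (Z.of_nat p) w mh ->
  exists2 t, t <= 2 * size s + p + 3 &
    phase_conf (iter t (step x) c) (inr Count) i (nseq p false ++ bin_succ s) 0 w mh.
Proof.
elim: s => [|b s IH] p i w mh c H.
  have Hr : read_input (nseq p false ++ [::]) (Z.of_nat p) = Sb.
    by rewrite read_input_nat cats0 size_nseq ltnn.
  exists p.+2; first by lia.
  rewrite iterSr; apply: run_return; first by rewrite size_cat size_nseq addn1.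
  apply: (phase_conf_step H); rewrite ?Hr; phase_side.
  by move=> z; exact: (@read_input_write _ [::] true p (size_nseq _ _) z).
have Hr : read_input (nseq p false ++ b :: s) (Z.of_nat p) = bit b.
  by rewrite read_input_nat size_cat size_nseq nth_cat size_nseq ltnn subnn /= addnS ltnS leq_addr.
have Hcons t : nseq p false ++ false :: t = nseq p.+1 false ++ t.
  by rewrite !cat_nseq /ncons iterSr.
case: b H Hr => H Hr.
  have H' : phase_conf (step x c) (inr Incr) i (nseq p.+1 false ++ s) (Z.of_nat p.+1) w mh.
    apply: (phase_conf_step H); rewrite ?Hr; phase_side.
    by move=> z; rewrite -Hcons; exact: (@read_input_write _ (true :: s) false p (size_nseq _ _) z).
  have [t Ht H2] := IH _ _ _ _ _ H'.
  exists t.+1; first by rewrite /=; lia.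
  by rewrite iterSr /= Hcons.
exists p.+2; first by lia.
rewrite iterSr; apply: run_return; first by rewrite size_cat size_nseq /= leq_addr.
apply: (phase_conf_step H); rewrite ?Hr; phase_side.
by move=> z; exact: (@read_input_write _ (false :: s) true p (size_nseq _ _) z).
Qed.

Lemma run_count x r : forall i c, i + r = size x ->
  phase_conf c (inr Count) (Z.of_nat i) (iter i bin_succ [::]) 0 0 0 ->
  exists2 t, t <= r * (2 * size x + 7) + 1 &
    phase_conf (iter t (step x) c) (inr Mark) (Z.of_nat (size x)) (iter (size x) bin_succ [::])
      0 0 0.
Proof.
elim: r => [|r IH] i c Hi H.
  rewrite addn0 in Hi; subst i.
  have Hr : read_input x (Z.of_nat (size x)) = Sb by rewrite read_input_nat ltnn.
  by exists 1 => //; apply: (phase_conf_step H); rewrite ?Hr; phase_side.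
have Hlt : i < size x by rewrite -Hi addnS ltnS leq_addr.
have Hr : read_input x (Z.of_nat i) = bit (nth false x i) by rewrite read_input_nat Hlt.
have H1 : phase_conf (step x c) (inr Incr) (Z.of_nat i.+1) (nseq 0 false ++ iter i bin_succ [::])
            0 0 0.
  by case: (nth false x i) Hr => Hr; apply: (phase_conf_step H); rewrite ?Hr; phase_side.
have [t1 Ht1 H2] := run_incr x H1.
have [t2 Ht2 H3] := IH i.+1 _ (etrans (addSnnS i r) Hi) H2.
exists (t2 + (t1 + 1)); last by rewrite !iterD.
by have := binlen_le i; rewrite /binlen; lia.
Qed.

Lemma run_stamp x u : forall r (q : 'I_j.+1) p bs i c, r + u = j -> val q = r ->
  phase_conf c (inr (Stamp q)) i bs (Z.of_nat p) (j * p + r) (Z.of_nat (j * p + r)) ->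
  phase_conf (iter u.+1 (step x) c) (inr Mark) i bs (Z.of_nat p.+1) (j * p.+1)
    (Z.of_nat (j * p.+1)).
Proof.
elim: u => [|u IH] r q p bs i c Hr Hq H.
  rewrite addn0 in Hr; rewrite Hr -mulnSr in H; rewrite Hr in Hq.
  by apply: (phase_conf_step H); rewrite /= ?Hq ?eqxx; phase_side.
have Hqj : (val q == j) = false by rewrite Hq -Hr -{1}(addn0 r) eqn_add2l.
have H' : phase_conf (step x c) (inr (Stamp (inord r.+1))) i bs (Z.of_nat p) (j * p + r.+1)
            (Z.of_nat (j * p + r.+1)).
  apply: (phase_conf_step H); rewrite /= ?Hqj ?Hq; phase_side.
  by move=> z; rewrite addnS; exact: unary_write.
rewrite iterSr; apply: (IH r.+1 (inord r.+1)) H'; first by rewrite addSnnS.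
by apply: inordK; rewrite -Hr ltnS addnS ltnS leq_addr.
Qed.

Lemma run_mark x u : forall p bs i c, p + u = size bs ->
  phase_conf c (inr Mark) i bs (Z.of_nat p) (j * p) (Z.of_nat (j * p)) ->
  phase_conf (iter (u * (j + 2)).+1 (step x) c) (inr RewindMark) i bs (Z.of_nat (size bs))
    (j * size bs) (Z.of_nat (j * size bs) - 1).
Proof.
elim: u => [|u IH] p bs i c Hp H.
  rewrite addn0 in Hp; subst p.
  have Hr : read_input bs (Z.of_nat (size bs)) = Sb by rewrite read_input_nat ltnn.
  by apply: (phase_conf_step H); rewrite ?Hr; phase_side.
have Hlt : p < size bs by rewrite -Hp addnS ltnS leq_addr.
have Hr : read_input bs (Z.of_nat p) = bit (nth false bs p) by rewrite read_input_nat Hlt.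
have H1 : phase_conf (step x c) (inr (Stamp ord0)) i bs (Z.of_nat p) (j * p + 0)
            (Z.of_nat (j * p + 0)).
  by rewrite addn0; case: (nth false bs p) Hr => Hr;
     apply: (phase_conf_step H); rewrite ?Hr; phase_side.
have H2 := run_stamp x (add0n j) (erefl : val (ord0 : 'I_j.+1) = 0) H1.
have -> : (u.+1 * (j + 2)).+1 = (u * (j + 2)).+1 + (j.+1 + 1) by rewrite mulSn; lia.
by rewrite !iterD; apply: IH H2; rewrite addSnnS.
Qed.

Lemma run_rewind_mark x p : forall i bs ph w c, p <= w ->
  phase_conf c (inr RewindMark) i bs ph w (Z.of_nat p - 1) ->
  phase_conf (iter p.+1 (step x) c) (inr RewindInput) (i - 1) bs ph w 0.
Proof.
elim: p => [|p IH] i bs ph w c Hp H.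
  have Hr : unary w (Z.of_nat 0 - 1) = Sb by apply: unary_neg; lia.
  by apply: (phase_conf_step H); rewrite ?Hr; phase_side.
rewrite iterSr; apply: IH; first exact: ltnW.
have E : (Z.of_nat p.+1 - 1 = Z.of_nat p)%Z by lia.
rewrite E in H.
have Hr : unary w (Z.of_nat p) = S1 by rewrite unary_nat Hp.
by apply: (phase_conf_step H); rewrite ?Hr; phase_side.
Qed.

Lemma run_rewind_input x p : forall bs ph w mh c, p <= size x ->
  phase_conf c (inr RewindInput) (Z.of_nat p - 1) bs ph w mh ->
  phase_conf (iter p.+1 (step x) c) (inl (tm_q0 M)) 0 bs ph w mh.
Proof.
elim: p => [|p IH] bs ph w mh c Hp H.
  have Hr : read_input x (Z.of_nat 0 - 1) = Sb by apply: read_input_neg; lia.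
  by apply: (phase_conf_step H); rewrite ?Hr; phase_side.
rewrite iterSr; apply: IH; first exact: ltnW.
have E : (Z.of_nat p.+1 - 1 = Z.of_nat p)%Z by lia.
rewrite E in H.
have Hr : read_input x (Z.of_nat p) = bit (nth false x p) by rewrite read_input_nat Hp.
by case: (nth false x p) Hr => Hr; apply: (phase_conf_step H); rewrite ?Hr; phase_side.
Qed.

Definition sim_conf (m : nat) (c : conf M) (c' : conf prefix_TM) : Prop :=
  [/\ c_q c' = inl (c_q c), c_ih c' = c_ih c, c_wh c' mark_tape = c_ih c,
      forall z, c_tape c' mark_tape z = unary m z
    & forall i, c_wh c' (work_tape i) = c_wh c i /\
                forall z, c_tape c' (work_tape i) z = c_tape c i z].

Lemma step_sim m x c c' : sim_conf m c c' -> sim_conf m (step (take m x) c) (step x c').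
Proof.
case=> Hq Hi HMh HM Hw.
case Hh: (halted (c_q c)).
  have Hh' : halted (c_q c') by rewrite Hq.
  by rewrite /step Hh Hh'.
case E: (tm_delta (c_q c) (read_input (take m x) (c_ih c))
           [tuple c_tape c i (c_wh c i) | i < k]) => [[q2 d] wr].
rewrite (step_running Hh E).
set T := [tuple c_tape c' i (c_wh c' i) | i < k.+2].
have Hh' : halted (c_q c') = false by rewrite Hq.
have E' : tm_delta (c_q c') (read_input x (c_ih c')) T =
   (inl q2, d, [tuple tape_case (c_tape c' counter_tape (c_wh c' counter_tape), MoveS)
                  (unary m (c_ih c), d) (tnth wr) i | i < k.+2]).
  rewrite Hq /= /prefix_delta /T !tnth_mktuple HMh HM Hi -read_input_take.
  have -> : [tuple tnth [tuple c_tape c' i (c_wh c' i) | i < k.+2] (work_tape i) | i < k] =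
            [tuple c_tape c i (c_wh c i) | i < k].
    by apply: eq_from_tnth => i; rewrite !tnth_mktuple; have [-> ->] := Hw i.
  by rewrite E.
rewrite (step_running Hh' E'); split; rewrite /= ?tnth_mktuple ?tape_case_mark //.
- by rewrite Hi.
- by rewrite HMh.
- by move=> z; rewrite HMh HM; apply: write_same.
move=> i; rewrite !tnth_mktuple tape_case_work; have [H1 H2] := Hw i.
by split=> [|z]; rewrite H1 // H2.
Qed.

Lemma iter_step_sim m x c c' t : sim_conf m c c' ->
  sim_conf m (iter t (step (take m x)) c) (iter t (step x) c').
Proof. by move=> H; elim: t => //= t IH; apply: step_sim. Qed.

Definition prep_time (n : nat) : nat :=
  n * (2 * n + 7) + 1 + (binlen n * (j + 2)).+1 + (j * binlen n).+1 + n.+1.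

Lemma prefix_TM_prepares x :
  exists2 t, t <= prep_time (size x) &
    sim_conf (j * binlen (size x)) (init_conf M) (run prefix_TM x t).
Proof.
set n := size x; set B := iter n bin_succ [::].
have H0 : phase_conf (init_conf prefix_TM) (inr Count) (Z.of_nat 0) (iter 0 bin_succ [::]) 0 0 0.
  by constructor=> //= z; rewrite /read_input /unary;
     case: (Z.leb_spec 0 z); case: (Z.ltb_spec z 0) => //; lia.
have [t1 Ht1 H1] := run_count (add0n n) H0.
have H1' : phase_conf (iter t1 (step x) (init_conf prefix_TM)) (inr Mark) (Z.of_nat n) B
             (Z.of_nat 0) (j * 0) (Z.of_nat (j * 0)) by rewrite muln0.
have H2 := run_mark x (add0n (size B)) H1'.
have H3 := run_rewind_mark x (leqnn (j * size B)) H2.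
have H4 := run_rewind_input (leqnn n) H3.
exists (n.+1 + ((j * size B).+1 + ((size B * (j + 2)).+1 + t1))).
  by rewrite /prep_time -/n /binlen -/B; lia.
by rewrite /run !iterD; case: H4 => *; split.
Qed.

Definition log_prefix (g : seq bool -> bool) (x : seq bool) : bool :=
  g (take (j * binlen (size x)) x).

Lemma prefix_TM_decides g T : {homo T : a b / a <= b} -> decides_within M g T ->
  decides_within prefix_TM (log_prefix g) (fun n => prep_time n + T (j * binlen n)).
Proof.
move=> HT HM x.
have [t0 Ht0 Hsim] := prefix_TM_prepares x.
set m := j * binlen (size x).
have [t [Ht Hrun]] := HM (take m x).
have [Hq _ _ _ _] := iter_step_sim x t Hsim.
exists (t + t0); split.
  have : T (size (take m x)) <= T m by apply: HT; rewrite size_take_min geq_minl.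
  by lia.
rewrite /run iterD Hq -/(run M (take m x) t) Hrun /log_prefix -/m.
by case: (g (take m x)).
Qed.

End PrefixMachine.

Lemma exp_binlen_poly j a n : 0 < n -> 2 ^ (a * (j * binlen n)) <= 3 ^ (a * j) * n ^ (a * j).
Proof.
move=> Hn; have -> : a * (j * binlen n) = binlen n * (a * j) by lia.
rewrite -expnMn expnM.
have H3n : 2 ^ binlen n <= 3 * n by have := exp2_binlen_leq_double n; lia.
by case: (a * j) => [|e]; rewrite ?expn0 // leq_exp2r.
Qed.

Lemma prep_time_exp_poly j C a : exists D, forall n,
  prep_time j n + C * 2 ^ (a * (j * binlen n)) <= D * n ^ (2 + a * j) + D.
Proof.
set K := 3 ^ (a * j).
exists (9 + (j + 2) + j + 1 + C * K + C + 4) => n.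
case: n => [|n]; first by rewrite /prep_time /binlen /= !muln0 expn0; lia.
set N := n.+1; set L := binlen N; set X := N ^ (2 + a * j).
have HL : L <= N := binlen_le N.
have HX : N * N <= X by rewrite mulnn; apply: leq_pexp2l => //; rewrite leq_addr.
have HNX : N <= X by apply: leq_trans HX; rewrite leq_pmull.
have HP : 2 ^ (a * (j * L)) <= K * X.
  apply: leq_trans (exp_binlen_poly j a (ltn0Sn n)) _.
  by rewrite leq_mul2l leq_pexp2l ?leq_addl ?orbT.
rewrite /prep_time -/L.
have A1 : N * (2 * N + 7) <= 9 * X by nia.
have A2 : L * (j + 2) <= (j + 2) * X by nia.
have A3 : j * L <= j * X by nia.
have A4 : C * 2 ^ (a * (j * L)) <= (C * K) * X by rewrite -mulnA leq_mul2l HP orbT.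
by nia.
Qed.

Lemma log_prefix_poly_time g j : in_E g ->
  exists (M : TM) (c : nat), computes_in_poly_time M (log_prefix j g) c.
Proof.
case=> M [C [a HM]].
have [D HD] := prep_time_exp_poly j C a.
exists (prefix_TM M j), (2 + a * j), D.
apply: decides_within_mono (@prefix_TM_decides M j _ _ _ HM) HD => m n Hmn.
by rewrite leq_mul2l leq_pexp2l ?leq_mul2l ?Hmn ?orbT.
Qed.

(** * Circuits *)

Definition clamp_input (m : nat) (g : gate) : gate :=
  match g with GIn k => GIn (if k < m then k else 0) | _ => g end.

Lemma In_nth_gate (g : gate) C : List.In g C -> exists2 i, i < size C & nth (GIn 0) C i = g.
Proof.
elim: C => //= g0 C IH [->|/IH [i Hi Ei]]; first by exists 0.
by exists i.+1.
Qed.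

Lemma circuit_wf_input n C k : circuit_wf n C -> List.In (GIn k) C -> k < n.
Proof.
case/and3P=> _ /allP Hok _ /In_nth_gate [i Hi Ei].
by have := Hok i; rewrite mem_iota add0n Hi Ei => /(_ isT).
Qed.

Lemma foldl_clamp m (x y : seq bool) C vals :
  (forall k, List.In (GIn k) C -> nth false y (if k < m then k else 0) = nth false x k) ->
  foldl (fun vals g => rcons vals (eval_gate y vals g)) vals (map (clamp_input m) C) =
  foldl (fun vals g => rcons vals (eval_gate x vals g)) vals C.
Proof.
elim: C vals => //= g C IH vals H.
rewrite IH => [|k Hk]; last by apply: H; right.
by case: g H => //= k /(_ k (or_introl erefl)) ->.
Qed.

(* Inputs k >= m are rewired to input 0, hence [f] is evaluated on [y] padded with copies of its
   first bit. *)
Lemma circuit_computes_clamp n m C (f : n.-tuple bool -> bool) (h : m.-tuple bool -> bool) :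
  0 < m ->
  (forall y : m.-tuple bool, exists x : n.-tuple bool, f x = h y /\
      forall k, k < n -> nth false x k = nth false y (if k < m then k else 0)) ->
  circuit_computes C f -> circuit_computes (map (clamp_input m) C) h.
Proof.
move=> Hm Hext [Hwf Hc]; split.
  case/and3P: (Hwf) => Hs Hok Hrf; apply/and3P; split; rewrite ?size_map //.
    apply/allP => i; rewrite mem_iota add0n => /andP [_ Hi].
    rewrite (nth_map (GIn 0)) //.
    have := allP Hok i; rewrite mem_iota add0n Hi => /(_ isT).
    by case: (nth (GIn 0) C i) => //= k _; case: ifP.
  apply/allP => i /(allP Hrf) /hasP [i' Hi' Hr]; apply/hasP; exists i' => //.
  move: Hi'; rewrite mem_iota add0n => /andP [_ Hi'].
  by rewrite (nth_map (GIn 0)) //; case: (nth (GIn 0) C i') Hr.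
move=> y; have [x [<- Hx]] := Hext y.
rewrite -Hc /circ_out /circ_vals (foldl_clamp (x := x)) // => k Hk.
by rewrite Hx // (circuit_wf_input Hwf Hk).
Qed.

Inductive formula :=
  FIn of nat | FNot of formula | FAnd of formula & formula | FOr of formula & formula.

Fixpoint eval_formula (x : seq bool) (f : formula) : bool :=
  match f with
  | FIn k => nth false x k
  | FNot a => ~~ eval_formula x a
  | FAnd a b => eval_formula x a && eval_formula x b
  | FOr a b => eval_formula x a || eval_formula x b
  end.

Fixpoint formula_scoped n (f : formula) : bool :=
  match f with
  | FIn k => k < n
  | FNot a => formula_scoped n a
  | FAnd a b | FOr a b => formula_scoped n a && formula_scoped n b
  end.

(* The gates of [f], to be placed at positions [o], [o + 1], ...; each subformula's output is
   the last gate of its block. *)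
Fixpoint compile (f : formula) (o : nat) : seq gate :=
  match f with
  | FIn k => [:: GIn k]
  | FNot a => let la := compile a o in la ++ [:: GNot (o + size la).-1]
  | FAnd a b => let la := compile a o in let lb := compile b (o + size la) in
                la ++ lb ++ [:: GAnd (o + size la).-1 (o + size la + size lb).-1]
  | FOr a b => let la := compile a o in let lb := compile b (o + size la) in
               la ++ lb ++ [:: GOr (o + size la).-1 (o + size la + size lb).-1]
  end.

Lemma size_compile_gt0 f o : 0 < size (compile f o).
Proof. by case: f => [k|a|a b|a b] //=; rewrite !size_cat /= !addnS. Qed.

Definition block_wf n o (l : seq gate) : Prop :=
  (forall i, i < size l -> gate_ok n (o + i) (nth (GIn 0) l i)) /\
  (forall i, i < (size l).-1 -> exists2 i', i' < size l & refs (o + i) (nth (GIn 0) l i')).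

Lemma block_wf1 n o g : gate_ok n o g -> block_wf n o [:: g].
Proof. by move=> H; split=> [[|i]|i] //; rewrite addn0. Qed.

Lemma block_wf_cat n o la lb : 0 < size la -> block_wf n o la -> block_wf n (o + size la) lb ->
  (exists2 i', i' < size lb & refs (o + (size la).-1) (nth (GIn 0) lb i')) ->
  block_wf n o (la ++ lb).
Proof.
move=> Hla [A1 A2] [B1 B2] [i0 Hi0 Hr]; split.
  move=> i; rewrite size_cat nth_cat => Hi; case: ltnP => Hil; first exact: A1.
  by have := B1 (i - size la); rewrite -addnA subnKC //; apply; lia.
move=> i; rewrite size_cat => Hi.
case: (ltnP i (size la).-1) => H1.
  by have [i' Hi' Hr'] := A2 i H1; exists i'; rewrite ?nth_cat ?Hi' //; lia.
case: (ltnP i (size la)) => H2.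
  have -> : i = (size la).-1 by lia.
  by exists (size la + i0); rewrite ?ltn_add2l // nth_cat ltnNge leq_addr /= addKn.
have [i' Hi' Hr'] := B2 (i - size la) (ltac:(lia)).
exists (size la + i'); first by rewrite ltn_add2l.
by rewrite nth_cat ltnNge leq_addr /= addKn; move: Hr'; rewrite -addnA subnKC.
Qed.

Lemma block_wf_compile n f o : formula_scoped n f -> block_wf n o (compile f o).
Proof.
elim: f o => [k|a IHa|a IHa b IHb|a IHa b IHb] o /=.
- by move=> Hk; apply: block_wf1.
- move=> Ha; have Pa := size_compile_gt0 a o.
  apply: block_wf_cat => //; first exact: IHa.
    by apply: block_wf1; rewrite /=; lia.
  by exists 0 => //=; apply/eqP; lia.
all: move=> /andP [Ha Hb]; have Pa := size_compile_gt0 a o.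
all: have Pb := size_compile_gt0 b (o + size (compile a o)).
all: apply: block_wf_cat => //;
  [ exact: IHa
  | apply: block_wf_cat => //;
      [ exact: IHb
      | by apply: block_wf1; rewrite /=; apply/andP; split; lia
      | by exists 0 => //=; apply/orP; right; apply/eqP; lia ]
  | exists (size (compile b (o + size (compile a o)))); rewrite ?size_cat /= ?addn1 //;
    by rewrite nth_cat ltnn subnn /=; apply/orP; left; apply/eqP; lia ].
Qed.

Lemma nth_block_last (vals vs rest : seq bool) o :
  size vals = o -> 0 < size vs -> nth false (vals ++ vs ++ rest) (o + size vs).-1 = last false vs.
Proof.
move=> <- Hvs; rewrite catA nth_cat size_cat ifT; last by lia.
by rewrite -size_cat nth_last last_cat; case: vs Hvs.
Qed.

Lemma foldl_compile x f o vals : size vals = o ->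
  exists2 vs,
    foldl (fun vals g => rcons vals (eval_gate x vals g)) vals (compile f o) = vals ++ vs &
    size vs = size (compile f o) /\ last false vs = eval_formula x f.
Proof.
elim: f o vals => [k|a IHa|a IHa b IHb|a IHa b IHb] o vals Hs /=.
- by exists [:: nth false x k]; rewrite ?cats1.
- have [vsa Ea [Sa La]] := IHa o vals Hs.
  have Pa : 0 < size vsa by rewrite Sa size_compile_gt0.
  rewrite foldl_cat Ea /=; eexists; first by rewrite rcons_cat.
  split; first by rewrite size_rcons Sa size_cat addn1.
  by rewrite last_rcons -Sa -[vals ++ vsa]cats0 -catA nth_block_last // La.
all: have [vsa Ea [Sa La]] := IHa o vals Hs.
all: have Pa : 0 < size vsa by rewrite Sa size_compile_gt0.
all: have Hs1 : size (vals ++ vsa) = o + size vsa by rewrite size_cat Hs.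
all: have [vsb Eb [Sb Lb]] := IHb _ _ (etrans Hs1 (congr1 _ Sa)).
all: have Pb : 0 < size vsb by rewrite Sb size_compile_gt0.
all: rewrite !foldl_cat Ea Eb /=; eexists; first by rewrite -catA rcons_cat.
all: split; first by rewrite size_rcons !size_cat Sa Sb /=; lia.
all: rewrite last_rcons -Sb -Sa nth_block_last // catA -[_ ++ vsb]cats0 -catA.
all: by rewrite (@nth_block_last _ _ _ _ Hs1) // La Lb.
Qed.

(* There are no constant gates: constants are built from input 0. *)
Definition ftrue : formula := FOr (FIn 0) (FNot (FIn 0)).
Definition ffalse : formula := FAnd (FIn 0) (FNot (FIn 0)).
Definition literal (i : nat) (b : bool) : formula := if b then FIn i else FNot (FIn i).

Definition minterm (n : nat) (y : seq bool) : formula :=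
  foldr (fun i acc => FAnd (literal i (nth false y i)) acc) ftrue (iota 0 n).

Definition dnf (n : nat) (ys : seq (seq bool)) : formula :=
  foldr (fun y acc => FOr (minterm n y) acc) ffalse ys.

Lemma eval_minterm n x y :
  eval_formula x (minterm n y) = all (fun i => nth false x i == nth false y i) (iota 0 n).
Proof.
rewrite /minterm; elim: (iota 0 n) => /= [|i s ->]; first by case: (nth false x 0).
by rewrite /literal; case: (nth false y i) => /=; case: (nth false x i).
Qed.

Lemma eval_dnf n x ys : eval_formula x (dnf n ys) = has (fun y => eval_formula x (minterm n y)) ys.
Proof. by elim: ys => /= [|y ys ->] //; case: (nth false x 0). Qed.

Lemma scoped_dnf n ys : 0 < n -> formula_scoped n (dnf n ys).
Proof.
move=> Hn; elim: ys => /= [|y ys ->]; first by rewrite Hn.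
rewrite andbT /minterm.
have : all (fun i => i < n) (iota 0 n) by apply/allP => i; rewrite mem_iota.
elim: (iota 0 n) => /= [|i s IH /andP [Hi Hs]]; first by rewrite Hn.
by rewrite IH // andbT /literal; case: (nth false y i).
Qed.

Lemma all_nth_eq_tuple n (x y : n.-tuple bool) :
  all (fun i => nth false x i == nth false y i) (iota 0 n) = (x == y).
Proof.
apply/allP/eqP => [H|->]; last by move=> i _.
apply: val_inj; apply: (@eq_from_nth _ false); first by rewrite !size_tuple.
by move=> i; rewrite size_tuple => Hi; apply/eqP/H; rewrite mem_iota add0n Hi.
Qed.

Lemma circuit_exists n (f : n.-tuple bool -> bool) : 0 < n -> exists C, circuit_computes C f.
Proof.
move=> Hn; set ys := map val [seq y <- enum {: n.-tuple bool} | f y].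
exists (compile (dnf n ys) 0); split.
  have [Hok Href] := block_wf_compile 0 (scoped_dnf ys Hn).
  apply/and3P; split; first exact: size_compile_gt0.
    by apply/allP => i; rewrite mem_iota add0n => /andP [_ Hi]; exact: Hok.
  apply/allP => i; rewrite mem_iota add0n => /andP [_ /Href [i' Hi' Hr]].
  by apply/hasP; exists i'; rewrite ?mem_iota ?add0n.
move=> x; have [vs E [_ L]] := foldl_compile x (dnf n ys) (erefl (size [::])).
rewrite /circ_out /circ_vals E /= L eval_dnf /ys has_map.
rewrite (@eq_has _ _ (pred1 x)) => [|y /=]; last by rewrite eval_minterm all_nth_eq_tuple eq_sym.
by rewrite has_pred1 mem_filter mem_enum andbT.
Qed.

(** * Complexity bounds *)

Lemma ex_least (P : nat -> Prop) : (exists k, P k) -> exists k, P k /\ forall i, P i -> k <= i.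
Proof.
case=> k; elim/ltn_ind: k => k IH Hk.
case: (classic (exists i, P i /\ i < k)) => [[i [Hi Hlt]]|Hno]; first exact: IH i Hlt Hi.
exists k; split=> // i Hi; rewrite leqNgt; apply/negP => Hlt; apply: Hno; by exists i.
Qed.

Lemma nmin_spec P k : nmin P = Some k -> P k /\ forall i, P i -> k <= i.
Proof.
rewrite /nmin; case: excluded_middle_informative => // Hex [<-].
exact: (epsilon_spec (inhabits 0) (fun k => P k /\ forall i, P i -> k <= i) (ex_least Hex)).
Qed.

Lemma nmin_exists P : (exists k, P k) -> exists k, nmin P = Some k.
Proof. by rewrite /nmin => H; case: excluded_middle_informative => // _; eexists. Qed.

Lemma compI_program (phi : interpreter) n (f : H n) h :
  (forall p x, phi p x <> None -> 0 < size p) ->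
  (forall x : n.-tuple bool, phi h x = Some (f x)) ->
  exists2 kI, compI phi f = Some kI & 0 < kI <= size h.
Proof.
move=> Hne Hh.
have [kI EI] : exists kI, compI phi f = Some kI by apply: nmin_exists; exists (size h), h.
have [[h' [Eh Hh']] Hmin] := nmin_spec EI.
exists kI => //; apply/andP; split; last by apply: Hmin; exists h.
by rewrite -Eh (Hne h' [tuple false | _ < n]) // Hh'.
Qed.

Lemma circ_len_ge s n : s <= circ_len s n.
Proof. by rewrite /circ_len; set t := maxn _ _; nia. Qed.

Lemma tuple_pad_first n m (y : m.-tuple bool) : m <= n ->
  exists2 x : n.-tuple bool, take m x = y &
    forall k, k < n -> nth false x k = nth false y (if k < m then k else 0).
Proof.
move=> Hmn; have Hsz : size (tval y ++ nseq (n - m) (nth false y 0)) == n.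
  by rewrite size_cat size_tuple size_nseq subnKC.
exists (Tuple Hsz) => [|k Hk /=]; first by rewrite /= take_size_cat ?size_tuple.
rewrite nth_cat size_tuple; case: ltnP => Hkm //.
by rewrite nth_nseq ifT // ltn_sub2r // (leq_ltn_trans Hkm Hk).
Qed.

Lemma mul_le_exp2_pred j : exists L0, forall L, L0 <= L -> j * L <= 2 ^ L.-1.
Proof.
exists (4 * j).+1 => L HL.
set u := L.-1; set v := u./2.
have Huv := odd_double_half u; rewrite -/v in Huv.
have Hv : 2 * j <= v by move: Huv; rewrite /u; case: (odd u) => /=; lia.
have H1 : v < 2 ^ v := ltn_expl v (isT : 1 < 2).
have H2 : 2 ^ (v + v) <= 2 ^ u by apply: leq_pexp2l => //; move: Huv; case: (odd u) => /=; lia.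
rewrite expnD in H2.
have -> : L = u.+1 by rewrite /u; lia.
by nia.
Qed.

Lemma eventually_mul_binlen_le j :
  exists N, forall n, N <= n -> 0 < binlen n /\ j * binlen n <= n.
Proof.
have [L0 HL0] := mul_le_exp2_pred j.
exists (2 ^ L0).+1 => n Hn.
have HL : L0 < binlen n.
  by rewrite -(ltn_exp2l _ _ (isT : 1 < 2)); exact: ltn_trans Hn (ltn_exp2_binlen n).
split; first by lia.
exact: leq_trans (HL0 _ (ltnW HL)) (exp2_binlen_leq (leq_trans (ltn0Sn _) Hn)).
Qed.

Section RealBounds.
Local Open Scope R_scope.

Lemma bigRmax_ge (T : finType) (P : pred T) (F : T -> R) t :
  P t -> F t <= \big[Rmax/0]_(i | P i) F i.
Proof.
move=> Ht; rewrite unlock; elim: (index_enum T) (mem_index_enum t) => //= a r IH.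
rewrite inE => /orP [/eqP <-|Hr]; first by rewrite Ht; apply: Rmax_l.
by case: (P a); [apply: Rle_trans (IH Hr) (Rmax_r _ _) | exact: IH].
Qed.

Lemma sup_ratio_ge phi n (f : H n) kI kC :
  compI phi f = Some kI -> compC f = Some kC -> INR kC / INR kI <= sup_ratio phi n.
Proof.
move=> EI EC.
have := @bigRmax_ge _ (fun f0 : H n => isSome (compI phi f0))
          (fun f0 => INR (odflt 0%N (compC f0)) / INR (odflt 0%N (compI phi f0))) f.
by rewrite EI EC; apply.
Qed.

Lemma compC_prefix_ge n m g (f : H n) (B : R) :
  (0 < m)%N -> (m <= n)%N -> (forall x : n.-tuple bool, f x = g (take m x)) ->
  (forall C, circuit_computes C (@restr g m) -> B <= INR (size C)) ->
  exists2 kC, compC f = Some kC & B <= INR kC.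
Proof.
move=> Hm Hmn Hf Hlb.
have [C0 HC0] := circuit_exists f (leq_trans Hm Hmn).
have [kC EC] : exists kC, compC f = Some kC.
  by apply: nmin_exists; exists (circ_len (size C0) n), C0.
have [[C [HC EkC]] _] := nmin_spec EC.
have Hext y : exists x : n.-tuple bool, f x = @restr g m y /\
    forall k, (k < n)%N -> nth false x k = nth false y (if (k < m)%N then k else 0%N).
  by have [x Ex Hx] := tuple_pad_first y Hmn; exists x; rewrite Hf Ex.
exists kC => //; rewrite EkC.
apply: (Rle_trans _ _ _ (Hlb _ (circuit_computes_clamp Hm Hext HC))).
by rewrite size_map; apply: le_INR; apply/leP; exact: circ_len_ge.
Qed.

Lemma exists_nat_mul_ge (r a : R) : 0 < a -> exists2 j : nat, (0 < j)%N & r <= a * INR j.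
Proof.
move=> Ha; have [j0 Hj0] := INR_unbounded (r / a).
exists j0.+1 => //; rewrite S_INR.
have -> : r = a * (r / a) by field; lra.
by apply: Rlt_le; apply: Rmult_lt_compat_l; lra.
Qed.

Lemma INR_expn b L : INR (b ^ L)%N = INR b ^ L.
Proof. by elim: L => [|L IH] //; rewrite expnS mult_INR IH. Qed.

Lemma Rpower_le_exp2 (n L j : nat) (a e : R) : (0 < n)%N -> (n <= 2 ^ L)%N ->
  0 <= e -> e <= a * INR j ->
  Rpower (INR n) e <= Rpower (INR 2) (a * INR (j * L)).
Proof.
move=> Hn HnL He Hea.
have H2L : INR n <= Rpower (INR 2) (INR L).
  rewrite Rpower_pow -?INR_expn; last by rewrite /=; lra.
  by apply: le_INR; apply/leP.
apply: (Rle_trans _ (Rpower (Rpower (INR 2) (INR L)) e)).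
  by apply: Rle_Rpower_l => //; split => //; apply: lt_0_INR; apply/ltP.
rewrite Rpower_mult mult_INR; apply: Rle_Rpower; first by rewrite /=; lra.
by have := pos_INR L; nra.
Qed.

Lemma scaled_le_ratio (kC kI s : nat) (P : R) :
  (0 < kI <= s)%N -> 0 <= P <= INR kC -> / INR s * P <= INR kC / INR kI.
Proof.
move=> /andP [HkI Hs] [HP HPk].
have HkI' : 0 < INR kI by apply: lt_0_INR; apply/ltP.
have Hs' : INR kI <= INR s by apply: le_INR; apply/leP.
rewrite /Rdiv Rmult_comm; apply: Rmult_le_compat => //.
  by apply: Rlt_le; apply: Rinv_0_lt_compat; lra.
exact: Rinv_le_contravar.
Qed.

End RealBounds.

Theorem mainTheorem15
  (U : nat -> interpreter)
  (* property of U^c from the context: every machine running in time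
     O(n^c') with c' < c is simulated by some program on all long inputs *)
  (HUsim : forall (c c' : nat) (M : TM) (g : seq bool -> bool),
      0 < c -> c' < c -> computes_in_poly_time M g c' ->
      exists (h : seq bool) (N : nat),
        forall x : seq bool, N <= size x -> U c h x = Some (g x))
  (* U^c outputs bottom unless p = E(T)u, and |E(T)| >= 2 *)
  (HUlen : forall (c : nat) (p x : seq bool), U c p x <> None -> 2 <= size p) :
  (exists g : seq bool -> bool, in_E g /\
     exists io : R, Rlt R0 io /\
       forall (n : nat) (C : seq gate), 1 <= n ->
         circuit_computes C (@restr g n) ->
         Rle (Rpower (INR 2) (Rmult io (INR n))) (INR (size C))) ->
  forall gamma : R, Rlt R0 gamma ->
    exists c : nat, 0 < c /\
      exists K : R, Rlt R0 K /\
        exists N : nat, forall n : nat, N <= n ->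
          Rle (Rmult K (Rpower (INR n) (Rplus R1 gamma))) (sup_ratio (U c) n).
Proof.
move=> [g [HgE [io [Hio Hlb]]]] gamma Hgam.
have [j Hj Hjio] := exists_nat_mul_ge (1 + gamma) Hio.
have [M [c HM]] := log_prefix_poly_time j HgE.
have [h [N0 Hh]] := HUsim c.+1 c M _ (ltn0Sn _) (ltnSn _) HM.
have Hprog p x : U c.+1 p x <> None -> 0 < size p by move/HUlen; apply: leq_trans.
have Hh0 : 0 < size h by apply: (Hprog h (nseq N0 false)); rewrite Hh ?size_nseq.
have [N1 HN1] := eventually_mul_binlen_le j.
exists c.+1; split=> //; exists (Rinv (INR (size h))); split.
  by apply: Rinv_0_lt_compat; apply: lt_0_INR; apply/ltP.
exists (maxn N0 N1) => n; rewrite geq_max => /andP [HN0 /HN1 [HL Hmn]].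
set m := j * binlen n; set f : H n := [ffun x : n.-tuple bool => log_prefix j g x].
have Hm0 : 0 < m by rewrite muln_gt0 Hj.
have Hfh (x : n.-tuple bool) : U c.+1 h x = Some (f x) by rewrite ffunE Hh // size_tuple.
have [kI EI HkI] := compI_program Hprog Hfh.
have Hf (x : n.-tuple bool) : f x = g (take m x) by rewrite ffunE /log_prefix size_tuple.
have [kC EC HkC] := compC_prefix_ge Hm0 Hmn Hf (fun C => Hlb m C Hm0).
apply: (Rle_trans _ _ _ _ (sup_ratio_ge EI EC)); apply: scaled_le_ratio => //; split.
  exact: Rlt_le (exp_pos _).
apply: Rle_trans HkC.
by apply: Rpower_le_exp2 (leq_trans Hm0 Hmn) (ltnW (ltn_exp2_binlen n)) _ Hjio; lra.
Qed.
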